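(* Let $n\ge 1$ and let $a_1,\dots,a_n\ge 2$ be integers. Let $\mathbb{E}=(a_i\delta_{i,j}+\delta_{i+1,j})_{i,j=1}^n$ (the upper bidiagonal $n\times n$ matrix with diagonal $a_1,\dots,a_n$ and all superdiagonal entries $1$). For $\mathbf{k}=(k_1,\dots,k_n)\in\mathbb{Z}^n$ define rational numbers $\omega^{(n)}_{\mathbf{k},1},\dots,\omega^{(n)}_{\mathbf{k},n}$ by $$(\omega^{(n)}_{\mathbf{k},1},\dots,\omega^{(n)}_{\mathbf{k},n}):=(k_1+1,\dots,k_n+1)\,\mathbb{E}^{-T},$$ where $\mathbb{E}^{-T}=(\mathbb{E}^{-1})^T$. Then for every $\mathbf{k}$ with $0\le k_i\le a_i-1$ for $i=1,\dots,n-1$ and $0\le k_n\le a_n-2$, one has $0<\omega^{(n)}_{\mathbf{k},i}<1$ for all $i=1,\dots,n$. Moreover, setting $\mathbf{k}^\ast:=(a_1-1,\dots,a_{n-1}-1,a_n-2)-\mathbf{k}$, one has $$\omega^{(n)}_{\mathbf{k}^\ast,i}=1-\omega^{(n)}_{\mathbf{k},i},\qquad i=1,\dots,n.$$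
   Context: $\mathbb{E}$ is the exponent matrix of the chain-type polynomial $f_n=z_1^{a_1}z_2+z_2^{a_2}z_3+\cdots+z_{n-1}^{a_{n-1}}z_n+z_n^{a_n}$. *)

From HB Require Import structures.
From mathcomp Require Import all_boot all_order all_algebra.
Set Implicit Arguments. Unset Strict Implicit. Unset Printing Implicit Defensive.
Import Order.TTheory GRing.Theory Num.Theory.
Local Open Scope ring_scope.

(* Exponent matrix of the chain polynomial: E_{ij} = a_i delta_{ij} + delta_{i+1,j}
   (0-based indices here). *)
Definition chainE (n : nat) (a : 'I_n -> int) : 'M[rat]_n :=
  \matrix_(i, j) ((a i)%:~R * (i == j)%:R + ((val i).+1 == val j)%:R).

Definition omega (n : nat) (a : 'I_n -> int) (k : 'I_n -> int) : 'rV[rat]_n :=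
  (\row_i ((k i)%:~R + 1)) *m (invmx (chainE a))^T.

Definition kstar (n : nat) (a : 'I_n -> int) (k : 'I_n -> int) : 'I_n -> int :=
  fun i => (if val i == n.-1 then a i - 2 else a i - 1) - k i.

From HB Require Import structures.
From mathcomp Require Import all_boot all_order all_algebra.
From mathcomp Require Import ring lra zify.
Import Order.TTheory GRing.Theory Num.Theory.
Local Open Scope ring_scope.

(* Since E^T is lower bidiagonal, omega E^T = k + 1 reads
   a_j omega_j + omega_(j+1) = k_j + 1 (with omega_(n+1) = 0).  Solving it
   from the last coordinate backwards, omega_j = (k_j + 1 - omega_(j+1)) / a_j
   stays in (0, 1) because omega_n = (k_n + 1) / a_n does and the numerator lies
   in (0, a_j).  The recurrence is affine, and 1 - omega solves it for k*, so
   omega at k* is 1 - omega at k by uniqueness. *)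

Lemma ord_down_ind (n : nat) (P : 'I_n -> Prop) :
  (forall j : 'I_n, (forall i : 'I_n, (j < i)%N -> P i) -> P j) -> forall j, P j.
Proof.
move=> IH j; move: {2}(n - j)%N (leqnn (n - j)) => d.
elim: d j => [|d IHd] j hj; apply: IH => i lt_ji.
  by have := ltn_ord i; lia.
by apply: IHd; have := ltn_ord i; lia.
Qed.

Lemma in01_of_affine_eq {R : realFieldType} {a w y k : R} :
  a * w + y = k + 1 -> 0 < a -> 0 <= k -> y < 1 -> k + 1 - y < a -> 0 < w < 1.
Proof. by move=> *; apply/andP; split; nra. Qed.

Definition next_coord {n : nat} (x : 'rV[rat]_n) (j : 'I_n) : rat :=
  if (j.+1 < n)%N then x 0 (insubd j j.+1) else 0.

Section ChainMatrix.
Variables (n : nat) (a : 'I_n -> int).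

Lemma chainE_trig : is_trig_mx (chainE a)^T.
Proof.
apply/is_trig_mxP => i j lt_ij; rewrite !mxE -val_eqE /=.
by rewrite (gtn_eqF lt_ij) (gtn_eqF (ltn_trans lt_ij (ltnSn j))) mulr0 add0r.
Qed.

Lemma det_chainE : \det (chainE a) = \prod_i (a i)%:~R.
Proof.
rewrite -det_tr det_trig ?chainE_trig //.
by apply: eq_bigr => i _; rewrite !mxE eqxx mulr1 gtn_eqF // addr0.
Qed.

Lemma mul_tr_chainE (x : 'rV[rat]_n) (j : 'I_n) :
  (x *m (chainE a)^T) 0 j = (a j)%:~R * x 0 j + next_coord x j.
Proof.
rewrite /next_coord !mxE.
under eq_bigr => i _ do rewrite !mxE mulrDr.
rewrite big_split /= (bigD1 j) //= big1 ?addr0; last first.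
  by move=> i /negbTE; rewrite eq_sym => ->; rewrite !mulr0.
rewrite eqxx mulr1 mulrC; congr (_ + _).
case: ifP => lt_j1n.
  rewrite (bigD1 (insubd j j.+1)) //= val_insubd lt_j1n eqxx mulr1 big1 ?addr0 //.
  move=> i ne_ij; rewrite (_ : (j.+1 == i) = false) ?mulr0 //.
  apply/negbTE; apply: contra ne_ij => /eqP e; apply/eqP/val_inj.
  by rewrite /= val_insubd lt_j1n e.
rewrite big1 // => i _; rewrite (_ : (j.+1 == i) = false) ?mulr0 //.
by apply/negbTE/eqP => e; move: (ltn_ord i); rewrite -e lt_j1n.
Qed.

Hypothesis a_neq0 : forall i, a i != 0.

Lemma chainE_unit : chainE a \in unitmx.
Proof.
rewrite unitmxE det_chainE unitfE prodf_seq_neq0.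
by apply/allP => i _ /=; rewrite intr_eq0.
Qed.

Lemma omega_eq (k : 'I_n -> int) (j : 'I_n) :
  (a j)%:~R * omega a k 0 j + next_coord (omega a k) j = (k j)%:~R + 1.
Proof.
rewrite -mul_tr_chainE /omega -mulmxA -trmx_mul mulmxV ?chainE_unit //.
by rewrite trmx1 mulmx1 mxE.
Qed.

Lemma omega_unique (k : 'I_n -> int) (v : 'rV[rat]_n) :
  (forall j, (a j)%:~R * v 0 j + next_coord v j = (k j)%:~R + 1) ->
  omega a k = v.
Proof.
move=> v_eq; have vE : v *m (chainE a)^T = \row_i ((k i)%:~R + 1).
  by apply/rowP => j; rewrite mul_tr_chainE mxE v_eq.
by rewrite /omega -vE -mulmxA -trmx_mul mulVmx ?chainE_unit // trmx1 mulmx1.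
Qed.

Lemma omega_kstar (k : 'I_n -> int) :
  omega a (kstar a k) = const_mx 1 - omega a k.
Proof.
apply: omega_unique => j; have := omega_eq k j; set w := omega a k.
rewrite /next_coord /kstar /= !mxE; case: ifP => lt_j1n.
  by rewrite ifN ?mxE ?rmorphB /=; [lra | apply/eqP; lia].
by rewrite ifT ?rmorphB /=; [lra | apply/eqP; have := ltn_ord j; lia].
Qed.

Lemma omega_in01 (k : 'I_n -> int) :
  (forall i, (val i < n.-1)%N -> 0 <= k i <= a i - 1) ->
  (forall i, val i = n.-1 -> 0 <= k i <= a i - 2) ->
  forall i, 0 < omega a k 0 i < 1.
Proof.
move=> k_bounds k_last; apply: ord_down_ind => j IH.
have := omega_eq k j; rewrite /next_coord; case: ifP => lt_j1n eq_j.
  have /andP[k_ge0 k_le] : 0 <= k j <= a j - 1 by apply: k_bounds => /=; lia.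
  have /andP[y_gt0 y_lt1] : 0 < omega a k 0 (insubd j j.+1) < 1.
    by apply: IH; rewrite val_insubd lt_j1n.
  have k_ge0' : (0 : rat) <= (k j)%:~R by rewrite ler0z.
  move: k_le; rewrite -(ler_int rat) rmorphB /= => k_le.
  by apply: (in01_of_affine_eq eq_j); lra.
have /andP[k_ge0 k_le] : 0 <= k j <= a j - 2.
  by apply: k_last => /=; have := ltn_ord j; lia.
have k_ge0' : (0 : rat) <= (k j)%:~R by rewrite ler0z.
move: k_le; rewrite -(ler_int rat) rmorphB /= => k_le.
by apply: (in01_of_affine_eq eq_j); lra.
Qed.

End ChainMatrix.

Theorem proposition2p12 (n : nat) (a k : 'I_n -> int) :
  (1 <= n)%N ->
  (forall i, 2 <= a i) ->
  (forall i, (val i < n.-1)%N -> 0 <= k i <= a i - 1) ->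
  (forall i, val i = n.-1 -> 0 <= k i <= a i - 2) ->
  (forall i, 0 < omega a k 0 i < 1) /\
  (forall i, omega a (kstar a k) 0 i = 1 - omega a k 0 i).
Proof.
move=> _ a_ge2 k_bounds k_last.
have a_neq0 i : a i != 0 by rewrite gt_eqF // (lt_le_trans _ (a_ge2 i)).
split; first exact: omega_in01.
by move=> i; rewrite omega_kstar // !mxE.
Qed.
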